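(* Let $T$ be a map on $[0,1]$ and $\nu$ a $T$-invariant exponentially mixing probability measure. Let $h>0$ and $\epsilon>0$. For $n\in\mathbb N$, $N\le 2^n$ and distinct balls $B_1,\dots,B_N$ with $|B_i|=2^{-n}$ and $\nu(B_i)\ge2^{-n(h-\epsilon)}$ for all $i$, set $\mathcal C_{n,N,h}=\{x\in[0,1]:\exists\,1\le i\le N\text{ such that }\tau(x,B_i)\ge2^{nh}\}$. Then there exists an integer $n_h$, independent of $N$, such that for every $n\ge n_h$ (and every such choice of $N$ and balls), $\nu(\mathcal C_{n,N,h})\le2^{-n}$.
   Context: A $T$-invariant measure $\nu$ on $[0,1]$ is exponentially mixing if there exist constants $C>0$ and $0<\beta<1$ such that for every ball $A$, every Borel set $B$ and every $n\ge1$, $|\nu(A\cap T^{-n}B)-\nu(A)\nu(B)|\le C\beta^n\nu(B)$. $|B|$ denotes the diameter of $B$. For a ball $B$, the first hitting time is $\tau(x,B)=\inf\{n\ge1:T^nx\in B\}$, with $\tau(x,B)=\infty$ if no such $n$ exists. *)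

From HB Require Import structures.
From mathcomp Require Import all_boot all_order all_algebra.
From mathcomp Require Import all_classical all_reals all_analysis.
Set Implicit Arguments. Unset Strict Implicit. Unset Printing Implicit Defensive.
Import Order.TTheory GRing.Theory Num.Theory.
Import numFieldNormedType.Exports.
Local Open Scope classical_set_scope.
Local Open Scope ring_scope.

(* A ball of the metric space [0,1]: an open ball centred at a point of
   [0,1] with positive radius (seen as a subset of R; since the measures and
   dynamics considered live on [0,1], intersecting with [0,1] is immaterial
   for measures and hitting times). *)
Definition is_ball01 {R : realType} (A : set R) : Prop :=
  exists (c r : R), c \in `[(0:R), 1] /\ 0 < r /\ A = ball c r.

Definition is_ball01_diam {R : realType} (d : R) (A : set R) : Prop :=
  exists c : R, c \in `[(0:R), 1] /\ A = ball c (d / 2).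

Definition T_invariant {R : realType} (T : R -> R) (nu : probability R R) : Prop :=
  forall B : set R, measurable B -> nu (T @^-1` B) = nu B.

Definition exp_mixing {R : realType} (T : R -> R) (nu : probability R R) : Prop :=
  exists C beta : R, 0 < C /\ 0 < beta < 1 /\
    forall (A B : set R) (n : nat), is_ball01 A -> measurable B -> (1 <= n)%N ->
      `| fine (nu (A `&` (iter n T) @^-1` B)) - fine (nu A) * fine (nu B) |
        <= C * beta ^+ n * fine (nu B).

(* First hitting time tau(x,B) = inf {n >= 1 : T^n x \in B}, valued in the
   extended reals (+oo when the set is empty). *)
Definition hitting_time {R : realType} (T : R -> R) (x : R) (B : set R) : \bar R :=
  ereal_inf [set (k%:R)%:E | k in [set k : nat | (1 <= k)%N /\ B (iter k T x)]].

Definition Cset {R : realType} (T : R -> R) (n N : nat) (h : R)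
  (B : 'I_N -> set R) : set R :=
  [set x | x \in `[(0:R), 1] /\ exists i : 'I_N,
     (((2 : R) `^ (n%:R * h))%:E <= hitting_time T x (B i))%E].

From HB Require Import structures.
From mathcomp Require Import all_boot all_order all_algebra.
From mathcomp Require Import all_classical all_reals all_analysis.
From mathcomp Require Import ring lra.
Import Order.TTheory GRing.Theory Num.Theory.
Import numFieldNormedType.Exports.
Local Open Scope classical_set_scope.
Local Open Scope ring_scope.

(* Fix a ball B with nu(B) >= P^-1, where P = 2^(n(h - eps)).  If the hitting
   time of B from x is at least 2^(nh) > k g, then the orbit of T^g x misses B
   at the k times 0, g, ..., (k - 1) g.  Mixing at gap g turns each of these
   constraints into a factor 1 - nu(B) + C beta^g <= 1 - P^-1/2 once the gap g
   is linear in n, so these points have measure at most (1 - P^-1/2)^k, which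
   is at most 4^-n for k ~ 4 n P.  For n large, k g = O(n^2 P) stays below
   2^(nh) = P 2^(n eps), and a union bound over the N <= 2^n balls gives
   2^-n. *)

Lemma measurableT_preimage d d' (X : measurableType d) (Y : measurableType d')
  (f : X -> Y) (A : set Y) :
  measurable_fun setT f -> measurable A -> measurable (f @^-1` A).
Proof. by move=> mf mA; rewrite -[_ @^-1` _]setTI; exact: mf. Qed.

Lemma content_le_sum_ord d (T : ringOfSetsType d) (R : realFieldType)
  (mu : {content set T -> \bar R}) n (A : set T) (F : 'I_n -> set T) :
  measurable A -> (forall i, measurable (F i)) -> A `<=` \bigcup_i F i ->
  (mu A <= \sum_(i < n) mu (F i))%E.
Proof.
move=> mA mF AF.
pose G k := if insub k is Some i then F i else set0.
have GF (i : 'I_n) : G i = F i by rewrite /G valK.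
under eq_bigr do rewrite -GF.
apply: content_subadditive => // [k _|x /AF [i _ Fix]].
  by rewrite /G; case: insub.
by rewrite -bigcup_mkord; exists i => /=; [exact: ltn_ord | rewrite GF].
Qed.

Definition avoid_every {X : Type} (T : X -> X) (g k : nat) (B : set X) :
    set X :=
  [set x | forall j, (j < k)%N -> ~ B (iter (j * g) T x)].

Lemma avoid_every0 {X : Type} (T : X -> X) g B : avoid_every T g 0 B = setT.
Proof. by apply/seteqP; split. Qed.

Lemma avoid_everyS {X : Type} (T : X -> X) g k B :
  avoid_every T g k.+1 B = ~` B `&` iter g T @^-1` avoid_every T g k B.
Proof.
apply/seteqP; split => x.
  move=> Hx; split; first exact: (Hx 0%N).
  by move=> j jk; rewrite /= -iterD -mulSnr; apply: Hx.
by move=> [Bx Hx] [|j] //= jk; rewrite mulSnr iterD; apply: Hx.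
Qed.

Section iterates.
Context {d} {X : measurableType d} {T : X -> X}.
Hypothesis mT : measurable_fun setT T.

Lemma measurable_fun_iter j : measurable_fun setT (iter j T).
Proof.
elim: j => [|j IHj] /=; first exact: measurable_id.
exact: measurableT_comp mT IHj.
Qed.

Lemma measurable_avoid_every g k B :
  measurable B -> measurable (avoid_every T g k B).
Proof.
move=> mB; elim: k => [|k IHk]; first by rewrite avoid_every0.
rewrite avoid_everyS; apply: measurableI; first exact: measurableC.
exact: measurableT_preimage (measurable_fun_iter g) IHk.
Qed.

Context {R : realType} {mu : probability X R}.
Hypothesis invT : forall A, measurable A -> mu (T @^-1` A) = mu A.

Lemma measure_preimage_iter j A : measurable A -> mu (iter j T @^-1` A) = mu A.
Proof.
elim: j A => [|j IHj] A mA //=.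
by rewrite -[X in mu X]/(iter j T @^-1` (T @^-1` A)) IHj ?invT //;
  exact: measurableT_preimage.
Qed.

Lemma measure_avoid_every_le (B : set X) (g : nat) (c : R) :
    measurable B ->
    (forall A, measurable A ->
       fine (mu B) * fine (mu A) - c * fine (mu A)
         <= fine (mu (B `&` iter g T @^-1` A))) ->
    0 <= 1 - fine (mu B) + c ->
  forall k, fine (mu (avoid_every T g k B)) <= (1 - fine (mu B) + c) ^+ k.
Proof.
move=> mB mix q_ge0; elim=> [|k IHk].
  by rewrite avoid_every0 probability_setT expr0.
set F := avoid_every T g k B; set P := iter g T @^-1` F.
have mF : measurable F by exact: measurable_avoid_every.
have mP : measurable P.
  exact: measurableT_preimage (measurable_fun_iter g) mF.
have finE A : measurable A -> mu A \is a fin_num.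
  by move=> mA; exact: fin_num_measure.
have PE : fine (mu P) = fine (mu F) by rewrite measure_preimage_iter.
have hit : fine (mu B) * fine (mu F) - c * fine (mu F) <= fine (mu (P `&` B)).
  by rewrite setIC; exact: mix.
have -> : fine (mu (avoid_every T g k.+1 B))
    = fine (mu P) - fine (mu (P `&` B)).
  have mPB : measurable (P `&` B) by exact: measurableI.
  rewrite avoid_everyS setIC -setDE measureD ?fineB ?finE // ltey_eq finE //.
rewrite PE exprS.
have F_ge0 : 0 <= fine (mu F) by exact/fine_ge0/measure_ge0.
have : (1 - fine (mu B) + c) * fine (mu F)
    <= (1 - fine (mu B) + c) * (1 - fine (mu B) + c) ^+ k by exact: ler_wpM2l.
nra.
Qed.

End iterates.

Section numerics.
Context {R : realType}.

Lemma expRN1_le_half : expR (-1) <= 2^-1 :> R.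
Proof.
rewrite expRN lef_pV2 ?posrE ?expR_gt0 //.
by have := expR_ge1Dx (1 : R); rewrite (_ : 1 + 1 = 2 :> R).
Qed.

Lemma exists_expr_le_half (b : R) :
  0 < b < 1 -> exists m : nat, b ^+ m <= 2^-1.
Proof.
move=> /andP[b_gt0 b_lt1].
have lnb_gt0 : 0 < - ln b by rewrite oppr_gt0 ln_lt0 // b_gt0.
exists (Num.trunc (- ln b)^-1).+1.
have m_gt := truncnS_gt (- ln b)^-1.
rewrite -[b in b ^+ _]lnK // -expRM_natl; apply: le_trans expRN1_le_half.
rewrite ler_expR -lerN2 opprK -mulrN -ler_pdivrMr // div1r; exact: ltW.
Qed.

Lemma gap_bound (C b h : R) : 0 <= C -> 0 < b < 1 ->
  exists a c : nat, (0 < c)%N /\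
    forall n : nat, C * b ^+ (a * n + c) <= (2 `^ (n%:R * h))^-1 / 2.
Proof.
(* b^(m(Hn + c)) <= 2^-(Hn) 2^-c, where 2^(nh) <= 2^(Hn) and C 2^-c <= 1/2 *)
move=> C_ge0 b01; have [m bm] := exists_expr_le_half b b01.
have /andP[b_gt0 _] := b01.
have m_gt0 : (0 < m)%N by case: m bm => //; rewrite expr0; lra.
set H := (Num.trunc h).+1; set c := (Num.trunc (2 * C)).+1.
exists (m * H)%N, (m * c)%N; split; first by rewrite muln_gt0 m_gt0.
move=> n; rewrite -mulnA -mulnDr exprM.
have -> : C * (b ^+ m) ^+ (H * n + c) = C * b ^+ m ^+ c * (b ^+ m) ^+ (H * n).
  by rewrite exprD; ring.
rewrite [leRHS]mulrC; apply: ler_pM.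
- by apply: mulr_ge0 => //; exact/exprn_ge0/ltW/exprn_gt0.
- exact/exprn_ge0/exprn_ge0/ltW.
- apply: le_trans (_ : C * 2^-1 ^+ c <= _).
    by apply/ler_wpM2l/lerXn2r => //; rewrite nnegrE ?exprn_ge0 //; exact: ltW.
  have c_gt : 2 * C < c%:R := truncnS_gt _.
  have c_le : (c%:R : R) <= 2 ^+ c by rewrite -natrX ler_nat ltnW // ltn_expl.
  rewrite exprVn -ler_pdivlMr ?invr_gt0 ?exprn_gt0 // invrK; lra.
- apply: le_trans (_ : 2^-1 ^+ (H * n) <= _).
    by apply/lerXn2r => //; rewrite nnegrE ?exprn_ge0 //; exact: ltW.
  rewrite exprVn lef_pV2 ?posrE ?exprn_gt0 ?powR_gt0 //.
  rewrite -powR_mulrn // ler_powR ?ler1n // natrM mulrC.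
  by apply: ler_wpM2r => //; exact/ltW/truncnS_gt.
Qed.

Lemma sqr_lt_powR_eventually (A eps : R) : 0 < eps ->
  exists n0 : nat, (0 < n0)%N /\
    forall n : nat, (n0 <= n)%N -> A * n%:R ^+ 2 < 2 `^ (n%:R * eps).
Proof.
move=> eps_gt0; set c := ln (2 : R) * eps.
have c_gt0 : 0 < c by rewrite mulr_gt0 // ln_gt0 // ltr1n.
exists (Num.trunc (6 * `|A| / c ^+ 3)).+1; split => // n n0n.
have n_gt : 6 * `|A| < n%:R * c ^+ 3.
  rewrite -ltr_pdivrMr ?exprn_gt0 //.
  by apply: lt_le_trans (truncnS_gt _) _; rewrite ler_nat.
have -> : 2 `^ (n%:R * eps) = expR (c * n%:R).
  by rewrite /c -mulrA [eps * _]mulrC expRM lnK // posrE.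
apply: lt_le_trans (expR_ge1Dxn 2 (mulr_ge0 (ltW c_gt0) (ler0n R n))).
rewrite (_ : (3`!)%:R = 6 :> R) // exprMn.
have A_le : A * n%:R ^+ 2 <= `|A| * n%:R ^+ 2.
  by apply: ler_wpM2r; rewrite ?sqr_ge0 ?ler_norm.
have : 6 * `|A| * n%:R ^+ 2 <= n%:R * c ^+ 3 * n%:R ^+ 2.
  by apply: ler_wpM2r; rewrite ?sqr_ge0 ?ltW.
lra.
Qed.

Lemma geometric_le_inv4 (P : R) (n k : nat) :
  1 <= P -> 4 * n%:R * P < k%:R -> (1 - P^-1 / 2) ^+ k <= 2 ^- n / 2 ^+ n.
Proof.
move=> P_ge1 k_gt; have P_gt0 : 0 < P by lra.
have Pinv_gt0 : 0 < P^-1 by rewrite invr_gt0.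
have Pinv_le1 : P^-1 <= 1 by rewrite invf_le1.
apply: le_trans (_ : expR (- (P^-1 / 2)) ^+ k <= _).
  by apply: lerXn2r; rewrite ?nnegrE ?expR_ge0 ?expR_ge1Dx //; lra.
apply: le_trans (_ : expR (-1) ^+ (n + n) <= _).
  rewrite -!expRM_natl ler_expR natrD.
  have : 4 * n%:R < k%:R / P by rewrite ltr_pdivlMr.
  lra.
apply: le_trans (_ : 2^-1 ^+ (n + n) <= _).
  by apply: lerXn2r; rewrite ?nnegrE ?expR_ge0 ?expRN1_le_half.
by rewrite exprD !exprVn.
Qed.

Lemma exists_gap_length (C b h eps : R) :
    0 <= C -> 0 < b < 1 -> 0 < eps ->
  exists n0 : nat, forall n : nat, (n0 <= n)%N ->
    1 <= 2 `^ (n%:R * (h - eps)) ->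
  exists g k : nat, [/\ (0 < g)%N, (k * g)%:R < 2 `^ (n%:R * h),
    C * b ^+ g <= (2 `^ (n%:R * (h - eps)))^-1 / 2 &
    (1 - (2 `^ (n%:R * (h - eps)))^-1 / 2) ^+ k <= 2 ^- n / 2 ^+ n].
Proof.
move=> C_ge0 b01 eps_gt0.
have [a [c [c_gt0 gapH]]] := gap_bound C b h C_ge0 b01.
have [n0 [n0_gt0 sqrH]] :=
  sqr_lt_powR_eventually (5 * (a + c)%:R) eps eps_gt0.
exists n0 => n n0n; set P := 2 `^ _ => P_ge1.
have n_ge1 : 1 <= (n%:R : R) by rewrite ler1n (leq_trans n0_gt0 n0n).
set k := (Num.trunc (4 * n%:R * P)).+1.
have k_gt : 4 * n%:R * P < k%:R := truncnS_gt _.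
have k_le : k%:R <= 5 * n%:R * P.
  have : k%:R <= 4 * n%:R * P + 1.
    rewrite /k -addn1 natrD lerD2r truncn_le !mulr_ge0 //.
    exact: ltW (lt_le_trans ltr01 P_ge1).
  nra.
exists (a * n + c)%N, k; split => //.
- by rewrite addn_gt0 c_gt0 orbT.
- have g_le : ((a * n + c)%:R : R) <= (a + c)%:R * n%:R.
    rewrite -natrM ler_nat mulnDl leq_add2l leq_pmulr //.
    exact: leq_trans n0_gt0 n0n.
  rewrite natrM.
  apply: le_lt_trans (_ : 5 * n%:R * P * ((a + c)%:R * n%:R) < _).
    by apply: ler_pM.
  rewrite (_ : n%:R * h = n%:R * (h - eps) + n%:R * eps); last by ring.
  rewrite powRD ?pnatr_eq0 ?implybT // -/P.
  rewrite (_ : 5 * _ * _ * _ = P * (5 * (a + c)%:R * n%:R ^+ 2)); last ring.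
  by rewrite ltr_pM2l ?sqrH // (lt_le_trans ltr01).
- apply: le_trans (gapH n) _; apply: ler_wpM2r => //.
  rewrite lef_pV2 ?posrE ?powR_gt0 // ler_powR ?ler1n // ler_wpM2l //; lra.
- exact: geometric_le_inv4.
Qed.

End numerics.

Section hitting.
Context {R : realType} (T : R -> R).

Definition late_hits (K : R) (B : set R) : set R :=
  [set x | (K%:E <= hitting_time T x B)%E].

Lemma late_hitsP K B x :
  late_hits K B x <-> forall j, (0 < j)%N -> B (iter j T x) -> K <= j%:R.
Proof.
split => [/ereal_infP Kx j j_gt0 Bj | Kx].
  by have := Kx _ (ex_intro2 _ _ j (conj j_gt0 Bj) erefl); rewrite lee_fin.
by apply/ereal_infP => _ [j [j_gt0 Bj] <-]; rewrite lee_fin; exact: Kx.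
Qed.

Lemma late_hits_sub_avoid K B g k : (0 < g)%N -> (k * g)%:R < K ->
  late_hits K B `<=` iter g T @^-1` avoid_every T g k B.
Proof.
move=> g_gt0 kgK x /late_hitsP Kx j jk; rewrite /= -iterD -mulSnr => Bj.
have jg_gt0 : (0 < j.+1 * g)%N by rewrite muln_gt0 g_gt0.
have jg_le : ((j.+1 * g)%:R : R) <= (k * g)%:R.
  by rewrite ler_nat leq_mul2r jk orbT.
have := Kx _ jg_gt0 Bj; lra.
Qed.

Hypothesis mT : measurable_fun setT T.

Lemma measurable_late_hits K B : measurable B -> measurable (late_hits K B).
Proof.
move=> mB.
have -> : late_hits K B =
    \bigcap_(j in [set j | (0 < j)%N /\ j%:R < K]) iter j T @^-1` ~` B.
  apply/seteqP; split => x.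
    move=> /late_hitsP Kx j [j_gt0 jK] Bj.
    by have := Kx j j_gt0 Bj; rewrite leNgt jK.
  move=> Kx; apply/late_hitsP => j j_gt0 Bj; rewrite leNgt; apply/negP => jK.
  exact: (Kx j (conj j_gt0 jK)).
apply: bigcap_measurableType => j _; apply: measurableT_preimage.
  exact: measurable_fun_iter.
exact: measurableC.
Qed.

Lemma measure_Cset_le (nu : probability R R) (n N : nat) (h : R)
    (B : 'I_N -> set R) : (forall i, measurable (B i)) ->
  (nu (Cset T n h B) <= \sum_(i < N) nu (late_hits (2 `^ (n%:R * h)) (B i)))%E.
Proof.
move=> mB; apply: content_le_sum_ord => [|i|x [_ [i Bi]]]; last by exists i.
- have -> : Cset T n h B =
      `[(0:R), 1]%classic `&` \bigcup_i late_hits (2 `^ (n%:R * h)) (B i).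
    by apply/seteqP; split => x [x01 [i]]; split => //; exists i.
  apply: measurableI; first exact: measurable_itv.
  by apply: fin_bigcup_measurable => // i _; exact: measurable_late_hits.
- exact: measurable_late_hits.
Qed.

Context {nu : probability R R}.
Hypothesis invT : T_invariant T nu.

Lemma measure_late_hits_le (B : set R) (g k : nat) (K c p : R) :
    measurable B -> (0 < g)%N -> (k * g)%:R < K ->
    (forall A, measurable A ->
       `|fine (nu (B `&` iter g T @^-1` A)) - fine (nu B) * fine (nu A)|
         <= c * fine (nu A)) ->
    0 <= c <= p / 2 -> p <= fine (nu B) ->
  (nu (late_hits K B) <= ((1 - p / 2) ^+ k)%:E)%E.
Proof.
move=> mB g_gt0 kgK mix /andP[c_ge0 c_le] pB.
have B_le1 : fine (nu B) <= 1.
  by rewrite -lee_fin fineK ?fin_num_measure ?probability_le1.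
have mF : measurable (avoid_every T g k B) by exact: measurable_avoid_every.
apply: (@le_trans _ _ (nu (avoid_every T g k B))).
  rewrite -(measure_preimage_iter mT invT g _ mF).
  apply: le_measure; rewrite ?inE; first exact: measurable_late_hits.
    exact: measurableT_preimage (measurable_fun_iter mT g) mF.
  exact: late_hits_sub_avoid.
rewrite -(fineK (fin_num_measure _ _ mF)) lee_fin.
apply: le_trans (measure_avoid_every_le mT invT _ _ c mB _ _ k) _.
- by move=> A mA; have := mix A mA; rewrite ler_norml => /andP[+ _]; lra.
- lra.
- by apply: lerXn2r; rewrite ?nnegrE; lra.
Qed.

End hitting.

Theorem lemma5p3 (R : realType) (T : R -> R) (nu : probability R R) :
  measurable_fun setT T ->
  (forall x, x \in `[(0:R), 1] -> T x \in `[(0:R), 1]) ->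
  nu (`[(0:R), 1]%classic) = 1%E ->
  T_invariant T nu ->
  exp_mixing T nu ->
  forall h eps : R, 0 < h -> 0 < eps ->
  exists n_h : nat, forall (n N : nat) (B : 'I_N -> set R),
    leq n_h n -> leq N (expn 2 n) ->
    injective B ->
    (forall i, is_ball01_diam ((2 : R) ^- n) (B i)) ->
    (forall i, ((2 : R) `^ (- (n%:R * (h - eps))))%:E <= nu (B i))%E ->
    (nu (Cset T n h B) <= ((2 : R) ^- n)%:E)%E.
Proof.
move=> mT _ _ invT [C [b [C_gt0 [b01 mix]]]] h eps _ eps_gt0.
have [n0 n0P] := exists_gap_length _ _ h _ (ltW C_gt0) b01 eps_gt0.
exists n0 => n N B n0n N_le _ Bball Bnu.
have mB i : measurable (B i).
  by have [c [_ ->]] := Bball i; exact: measurable_realfun.measurable_ball.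
set P := 2 `^ (n%:R * (h - eps)).
have late_le i :
    (nu (late_hits T (2 `^ (n%:R * h)) (B i)) <= (2 ^- n / 2 ^+ n)%:E)%E.
  have PB : P^-1 <= fine (nu (B i)).
    have := Bnu i; rewrite powRN.
    by rewrite -(fineK (fin_num_measure _ _ (mB i))) lee_fin.
  have P_ge1 : 1 <= P.
    rewrite -invf_le1 ?powR_gt0 //; apply: le_trans PB _.
    by rewrite -lee_fin fineK ?fin_num_measure ?probability_le1.
  have [g [k [g_gt0 kgK gapC geo]]] := n0P n n0n P_ge1; rewrite -/P in gapC geo.
  have ball_i : is_ball01 (B i).
    have [c [c01 ->]] := Bball i; exists c, (2 ^- n / 2).
    by rewrite divr_gt0 ?invr_gt0 ?exprn_gt0.
  apply: le_trans (measure_late_hits_le _ mT invT _ _ _ _ _ P^-1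
    (mB i) g_gt0 kgK _ _ PB) _; last by rewrite lee_fin.
  - by move=> A mA; exact: mix.
  - by rewrite gapC mulr_ge0 ?ltW ?exprn_gt0 //; case/andP: b01.
apply: le_trans (measure_Cset_le _ mT nu n N h B mB) _.
apply: (@le_trans _ _ (\sum_(i < N) (2 ^- n / 2 ^+ n)%:E)%E).
  by apply: lee_sum => i _; exact: late_le.
rewrite sumEFin lee_fin sumr_const card_ord.
apply: le_trans (ler_wpMn2l _ N_le) _.
  by rewrite divr_ge0 ?invr_ge0 ?exprn_ge0.
by rewrite -[_ / _ *+ _]mulr_natr natrX mulfVK ?expf_neq0.
Qed.
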